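(* Let $\lambda$ be a partition and $\pi$ an $R_\lambda$-permutation. If $\pi$ is $R_\lambda$-312-avoiding, then $\mathcal{D}_\lambda(\pi)=[Y_\lambda(\pi)]$, i.e. $\mathcal{D}_\lambda(\pi)=\{T\in\mathcal{T}_\lambda: T\le Y_\lambda(\pi)\}$.
   Context: Fix $n\ge1$; $[m]=\{1,\dots,m\}$. A partition is $\lambda=(\lambda_1\ge\cdots\ge\lambda_n\ge0)\in\mathbb{Z}^n$, with boxes $(j,i)$ (column $j$, row $i$), $1\le j\le\lambda_1$, $1\le i\le\zeta_j:=\#\{i:\lambda_i\ge j\}$; $R_\lambda:=\{\zeta_j:\zeta_j<n\}$ with elements $q_1<\dots<q_r$, $q_0:=0$, $q_{r+1}:=n$. An $R_\lambda$-permutation is a permutation $\pi$ of $[n]$ (one-line notation) strictly increasing on each index set $\{q_{h-1}+1,\dots,q_h\}$; it is $R_\lambda$-312-containing if there exist $h\in[r-1]$ and $1\le a\le q_h<b\le q_{h+1}<c\le n$ with $\pi_b<\pi_c<\pi_a$, and $R_\lambda$-312-avoiding otherwise. A tableau of shape $\lambda$ fills the boxes with values in $[n]$, strictly increasing down columns and weakly increasing along rows; $\mathcal{T}_\lambda$ is their set, ordered entrywise. The $\lambda$-key $Y_\lambda(\pi)$ is the tableau whose column $j$ consists of $\{\pi_1,\dots,\pi_{\zeta_j}\}$ in increasing order. Scanning tableau: the earliest weakly increasing subsequence (EWIS) of $x_1,x_2,\dots$ is $x_{i_1},x_{i_2},\dots$ with $i_1=1$ and $i_u$ the smallest index $>i_{u-1}$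 with $x_{i_u}\ge x_{i_{u-1}}$. For $T\in\mathcal{T}_\lambda$ and $l\in[\lambda_1]$, column $l$ of $S(T)$ is computed as follows: consider the boxes of $T$ in columns $l,\dots,\lambda_1$, initially unmarked; for $k=\zeta_l,\zeta_l-1,\dots,1$ in turn, form the sequence of lowest unmarked entries of columns $l,l+1,\dots$ (left to right, over columns still having unmarked boxes), take its EWIS, mark the contributing boxes, and set the entry of $S(T)$ at column $l$, row $k$ to the last term of the EWIS. The set of Demazure tableaux is $\mathcal{D}_\lambda(\pi):=\{T\in\mathcal{T}_\lambda:S(T)\le Y_\lambda(\pi)\}$. *)

From mathcomp Require Import all_boot.
Set Implicit Arguments. Unset Strict Implicit. Unset Printing Implicit Defensive.

Definition is_partition (n : nat) (lam : seq nat) : Prop :=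
  size lam = n /\ sorted geq lam.

Definition lam1 (lam : seq nat) : nat := nth 0 lam 0.

Definition zeta (lam : seq nat) (j : nat) : nat := count (fun x => j <= x) lam.

(* (j,i) is a box: column j, row i, 1-indexed *)
Definition is_box (lam : seq nat) (j i : nat) : Prop :=
  1 <= j <= lam1 lam /\ 1 <= i <= zeta lam j.

(* Tableaux are represented as lists of columns (top to bottom);
   entry T j i is the entry in column j, row i (1-indexed). *)
Definition entry (T : seq (seq nat)) (j i : nat) : nat :=
  nth 0 (nth [::] T j.-1) i.-1.

Definition is_tableau (n : nat) (lam : seq nat) (T : seq (seq nat)) : Prop :=
  size T = lam1 lam /\
  (forall j, 1 <= j <= lam1 lam -> size (nth [::] T j.-1) = zeta lam j) /\
  (forall j i, is_box lam j i -> 1 <= entry T j i <= n) /\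
  (forall j i, is_box lam j i -> is_box lam j i.+1 ->
      entry T j i < entry T j i.+1) /\
  (forall j i, is_box lam j i -> is_box lam j.+1 i ->
      entry T j i <= entry T j.+1 i).

Definition tab_le (lam : seq nat) (T U : seq (seq nat)) : Prop :=
  forall j i, is_box lam j i -> entry T j i <= entry U j i.

Definition pi_at (pi : seq nat) (i : nat) : nat := nth 0 pi i.-1.

Definition inR (n : nat) (lam : seq nat) (q : nat) : bool :=
  has (fun j => (zeta lam j == q) && (q < n)) (iota 1 (lam1 lam)).

Definition Rlist (n : nat) (lam : seq nat) : seq nat :=
  sort leq (undup [seq zeta lam j | j <- iota 1 (lam1 lam) & zeta lam j < n]).

Definition rR (n : nat) (lam : seq nat) : nat := size (Rlist n lam).

(* q_h for 1 <= h <= r (q_0 = 0) *)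
Definition qq (n : nat) (lam : seq nat) (h : nat) : nat :=
  nth 0 (0 :: Rlist n lam) h.

(* pi is a permutation of [n] strictly increasing on each block
   {q_{h-1}+1, ..., q_h}: positions a < b lie in the same block iff
   no q in R_lambda satisfies a <= q < b. *)
Definition R_perm (n : nat) (lam : seq nat) (pi : seq nat) : Prop :=
  perm_eq pi (iota 1 n) /\
  (forall a b, 1 <= a -> a < b -> b <= n ->
     (forall q, inR n lam q -> ~~ (a <= q < b)) ->
     pi_at pi a < pi_at pi b).

Definition R312_containing (n : nat) (lam : seq nat) (pi : seq nat) : Prop :=
  exists h, 1 <= h <= (rR n lam).-1 /\
  exists a b c,
    [/\ 1 <= a <= qq n lam h, qq n lam h < b <= qq n lam h.+1,
        qq n lam h.+1 < c <= n &
        pi_at pi b < pi_at pi c < pi_at pi a].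

Definition key (lam : seq nat) (pi : seq nat) : seq (seq nat) :=
  [seq sort leq (take (zeta lam j) pi) | j <- iota 1 (lam1 lam)].

(* Columns are seqs of the unmarked entries (top to bottom); marking a
   box always marks the lowest unmarked entry, i.e. removes the last one. *)
Definition droplast (c : seq nat) : seq nat := take (size c).-1 c.

(* Given current EWIS value v, continue the EWIS over the remaining
   columns' lowest entries; returns updated columns and the last term. *)
Fixpoint ewis_go (v : nat) (cs : seq (seq nat)) : seq (seq nat) * nat :=
  match cs with
  | [::] => ([::], v)
  | c :: cs' =>
      let x := last 0 c in
      if v <= x then
        let: (r, w) := ewis_go x cs' in (droplast c :: r, w)
      else
        let: (r, w) := ewis_go v cs' in (c :: r, w)
  end.

(* One step: form the sequence of lowest unmarked entries of columns still
   having unmarked boxes, take its EWIS, mark, return the last term. *)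
Definition scan_step (cs : seq (seq nat)) : seq (seq nat) * nat :=
  match [seq c <- cs | size c != 0] with
  | [::] => ([::], 0)
  | c0 :: rest =>
      let: (r, w) := ewis_go (last 0 c0) rest in (droplast c0 :: r, w)
  end.

(* values for k = k0, k0-1, ..., 1, in that order *)
Fixpoint scan_iter (k : nat) (cs : seq (seq nat)) : seq nat :=
  match k with
  | 0 => [::]
  | k'.+1 => let: (cs', w) := scan_step cs in w :: scan_iter k' cs'
  end.

Definition scanning (lam : seq nat) (T : seq (seq nat)) : seq (seq nat) :=
  [seq rev (scan_iter (zeta lam l) (drop l.-1 T)) | l <- iota 1 (lam1 lam)].

Definition demazure (n : nat) (lam pi : seq nat) (T : seq (seq nat)) : Prop :=
  is_tableau n lam T /\ tab_le lam (scanning lam T) (key lam pi).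

Definition below_key (n : nat) (lam pi : seq nat) (T : seq (seq nat)) : Prop :=
  is_tableau n lam T /\ tab_le lam T (key lam pi).

From mathcomp Require Import all_boot zify.
Set Implicit Arguments. Unset Strict Implicit. Unset Printing Implicit Defensive.

(* For [T <= S(T)]: each scanned value is the last term of an EWIS that starts
   at the box being computed, so it dominates that entry.
   For the converse, fix a column [l] and let [A = {pi_1, ..., pi_(zeta_l)}]
   be the content of column [l] of the key; [S(T)(l,k) <= Y(l,k)] says that
   fewer than [k] elements of [A] lie below [S(T)(l,k)].  Along the scan of
   columns [l, l+1, ...] an invariant ([scan_inv]) bounds, for every unmarked
   entry, how many elements of [A] lie below it.  Initially it follows from
   [T <= Y] and 312-avoidance: an entry of column [j] that is not in [A] lies
   above no [pi_i] with [zeta_j < i <= zeta_l].  Each EWIS preserves it, and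
   at the box where an EWIS ends it is exactly the required count. *)

Definition nbelow (A : seq nat) (x : nat) : nat := count (fun a => a < x) A.

Lemma nbelow_eq0 A x : {in A, forall a, x <= a} -> nbelow A x = 0.
Proof.
move=> Ax; apply/eqP; rewrite -leqn0 leqNgt -has_count; apply/hasP => -[a aA] /=.
by rewrite ltnNge Ax.
Qed.

Lemma nbelow0 A : nbelow A 0 = 0.
Proof. exact: nbelow_eq0. Qed.

Lemma nbelow_mono A : {homo nbelow A : x y / x <= y}.
Proof. by move=> x y xy; apply: sub_count => a /= ax; exact: leq_trans ax xy. Qed.

Lemma nbelow_mem_lt A x y : x \in A -> x < y -> nbelow A x < nbelow A y.
Proof.
move=> xA xy; rewrite /nbelow !(permP (perm_to_rem xA)) /= ltnn xy.
by rewrite add0n add1n ltnS; apply: nbelow_mono (ltnW xy).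
Qed.

Lemma sorted_nth_lt A i x : sorted leq A -> i < size A ->
  (nth 0 A i < x) = (i < nbelow A x).
Proof.
elim: A i => //= a A IH i sA.
have aA : {in A, forall b, a <= b} by apply/allP; exact: order_path_min leq_trans sA.
have {}IH := IH _ (path_sorted sA).
case: i => [|i] /= Hi; case: (ltnP a x) => ax //=.
- by rewrite nbelow_eq0 // => b /aA; apply: leq_trans.
- by rewrite add1n ltnS IH.
- rewrite nbelow_eq0 => [|b /aA]; last exact: leq_trans.
  by rewrite ltnNge (leq_trans ax) ?aA ?mem_nth.
Qed.

Definition col_le (p c : seq nat) : bool :=
  (size c <= size p) && all (fun r => nth 0 p r <= nth 0 c r) (iota 0 (size c)).

Lemma col_leP p c :
  reflect (size c <= size p /\ forall r, r < size c -> nth 0 p r <= nth 0 c r)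
          (col_le p c).
Proof.
apply: (iffP andP) => -[szc pc]; split => //.
  by move=> r rc; apply: (allP pc); rewrite mem_iota.
by apply/allP => r; rewrite mem_iota => /andP[_ /pc].
Qed.

Lemma col_le_trans : transitive col_le.
Proof.
move=> b a c /col_leP[ab Hab] /col_leP[bc Hbc]; apply/col_leP.
split=> [|r rc]; first exact: leq_trans bc ab.
exact: leq_trans (Hab _ (leq_trans rc bc)) (Hbc _ rc).
Qed.

Lemma size_droplast c : size (droplast c) = (size c).-1.
Proof. by rewrite /droplast size_take; case: (size c) => //= m; rewrite ltnSn. Qed.

Lemma nth_droplast c r : r < (size c).-1 -> nth 0 (droplast c) r = nth 0 c r.
Proof. by move=> rc; rewrite /droplast nth_take. Qed.

Lemma col_le_droplastr p c : col_le p c -> col_le p (droplast c).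
Proof.
move=> /col_leP[szc pc]; apply/col_leP; rewrite size_droplast.
split=> [|r rc]; first exact: leq_trans (leq_pred _) szc.
by rewrite nth_droplast // pc // (leq_trans rc (leq_pred _)).
Qed.

Lemma col_le_droplast p c : col_le p c -> col_le (droplast p) (droplast c).
Proof.
move=> /col_leP[szc pc]; apply/col_leP; rewrite !size_droplast.
split=> [|r rc]; first by rewrite -!subn1 leq_sub2r.
rewrite !nth_droplast ?pc //; lia.
Qed.

Lemma col_le_droplastl p c : col_le p c -> size c < size p ->
  col_le (droplast p) c.
Proof.
move=> /col_leP[_ pc] cp; apply/col_leP; rewrite size_droplast.
split=> [|r rc]; first lia.
by rewrite nth_droplast ?pc //; lia.
Qed.

Lemma col_le_last p c : col_le p c -> size c = size p -> last 0 p <= last 0 c.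
Proof.
move=> /col_leP[_ pc] cp; rewrite -!nth_last cp.
case E: (size p) cp => [|s] cp /=; first by rewrite !nth_default ?cp ?E.
by apply: pc; rewrite cp.
Qed.

Lemma col_le_size_lt p c : col_le p c -> last 0 c < last 0 p -> size c < size p.
Proof.
move=> pc; rewrite ltnNge ltn_neqAle (col_leP _ _ pc).1 andbT; apply: contra.
by move=> /eqP /(col_le_last pc).
Qed.

(* [k] is the number of scanning steps left.  The last clause is what keeps
   the third one alive when an EWIS skips [c]. *)
Definition scan_inv (A : seq nat) (k : nat) (c : seq nat) : Prop :=
  [/\ size c <= k,
      forall r, r.+1 < size c -> nth 0 c r < nth 0 c r.+1,
      forall r, r < size c -> nbelow A (nth 0 c r) <= r + k - size c &
      forall r, r < size c -> nth 0 c r \notin A -> nbelow A (nth 0 c r) <= r].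

Lemma scan_inv_droplast A k c : scan_inv A k c -> scan_inv A k.-1 (droplast c).
Proof.
case=> szc incr bound outA; split; rewrite size_droplast //.
- by rewrite -!subn1 leq_sub2r.
- by move=> r rc; rewrite !nth_droplast ?incr //; lia.
- move=> r rc; rewrite nth_droplast //.
  by apply: leq_trans (bound _ _) _; lia.
- by move=> r rc; rewrite nth_droplast // => /outA; apply; lia.
Qed.

Lemma nbelow_last A k c : scan_inv A k c -> 0 < k -> nbelow A (last 0 c) < k.
Proof.
case=> szc _ bound _ k0; rewrite -nth_last.
case E: (size c) => [|s] /=; first by rewrite nth_default ?E // nbelow0.
by have := bound s; rewrite E; lia.
Qed.

Lemma scan_inv_skip A k c v : scan_inv A k c -> size c < k ->
  last 0 c < v -> nbelow A v < k -> scan_inv A k.-1 c.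
Proof.
case=> szc incr bound outA ck cv vk.
have next r : r < size c -> nth 0 c r < nth v c r.+1.
  move=> rc; case: (ltnP r.+1 (size c)) => rc'.
    by rewrite (set_nth_default 0) ?incr.
  have -> : r = (size c).-1 by lia.
  by rewrite nth_last [nth v _ _]nth_default //; lia.
have below d : d <= size c ->
    nbelow A (nth v c (size c - d)) + size c < size c - d + k.
  elim: d => [|d IH] dc; first by rewrite subn0 nth_default //; lia.
  have rc : size c - d.+1 < size c by lia.
  have r1 : (size c - d.+1).+1 = size c - d by lia.
  rewrite (set_nth_default 0) //; have := IH (ltnW dc); rewrite -r1.
  case: (boolP (nth 0 c (size c - d.+1) \in A)) => cA.
    by have := nbelow_mem_lt cA (next _ rc); lia.
  by have := outA _ rc cA; lia.
split=> //; first lia.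
move=> r rc; have := below (size c - r) (leq_subr _ _).
by rewrite subKn ?(ltnW rc) // (set_nth_default 0) //; lia.
Qed.

Lemma ewis_go_inv A k cs p (marked : bool) v :
  sorted col_le (p :: cs) ->
  (if marked then v = last 0 p else last 0 p < v /\ size p < k) ->
  size p <= k -> nbelow A v < k -> {in cs, forall c, scan_inv A k c} ->
  [/\ sorted col_le ((if marked then droplast p else p) :: (ewis_go v cs).1),
      nbelow A (ewis_go v cs).2 < k &
      {in (ewis_go v cs).1, forall c, scan_inv A k.-1 c}].
Proof.
elim: cs p marked v => [|c cs IH] p marked v /=; first by split.
move=> /andP[pc ccs] Hv szp vk csinv.
have k0 : 0 < k by apply: leq_ltn_trans vk.
have cinv : scan_inv A k c by apply: csinv; rewrite mem_head.
have {}csinv : {in cs, forall c, scan_inv A k c}.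
  by move=> c' c'cs; apply: csinv; rewrite in_cons c'cs orbT.
have szc : size c <= k by case: cinv.
case: (leqP v (last 0 c)) => [vc|cv].
  case E: (ewis_go (last 0 c) cs) => [r w].
  have [] := IH c true (last 0 c) ccs erefl szc (nbelow_last cinv k0) csinv.
  rewrite E /= => r_sorted w_bound r_inv; split=> //.
    rewrite /= r_sorted andbT.
    by case: marked Hv => _; [apply: col_le_droplast | apply: col_le_droplastr].
  by move=> c' /predU1P[->|/r_inv //]; apply: scan_inv_droplast.
have ck : size c < k.
  case: marked Hv => [vp|[_ pk]]; last exact: leq_ltn_trans (col_leP _ _ pc).1 pk.
  by apply: leq_trans szp; apply: col_le_size_lt pc _; rewrite -vp.
case E: (ewis_go v cs) => [r w].
have [] := IH c false v ccs (conj cv ck) szc vk csinv.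
rewrite E /= => r_sorted w_bound r_inv; split=> //.
  rewrite /= r_sorted andbT; case: marked Hv => [vp|_] //.
  by rewrite col_le_droplastl // col_le_size_lt // -vp.
by move=> c' /predU1P[->|/r_inv //]; apply: scan_inv_skip cinv ck cv vk.
Qed.

Lemma scan_step_inv A k c0 cs : size c0 = k.+1 -> sorted col_le (c0 :: cs) ->
  {in c0 :: cs, forall c, scan_inv A k.+1 c} ->
  [/\ exists cs', (scan_step (c0 :: cs)).1 = droplast c0 :: cs',
      sorted col_le (scan_step (c0 :: cs)).1,
      {in (scan_step (c0 :: cs)).1, forall c, scan_inv A k c} &
      nbelow A (scan_step (c0 :: cs)).2 < k.+1].
Proof.
move=> szc0 sorted_cs csinv; rewrite /scan_step /= szc0 /=.
have c0inv : scan_inv A k.+1 c0 by apply: csinv; rewrite mem_head.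
have [] := @ewis_go_inv A k.+1 [seq c <- cs | size c != 0] c0 true (last 0 c0).
- have := sorted_filter col_le_trans (fun c => size c != 0) sorted_cs.
  by rewrite /= szc0.
- by [].
- by rewrite szc0.
- exact: nbelow_last.
- move=> c; rewrite mem_filter => /andP[_ ccs].
  by apply: csinv; rewrite in_cons ccs orbT.
case: ewis_go => r w /= r_sorted w_bound r_inv; split=> //; first by exists r.
by move=> c /predU1P[->|/r_inv //]; exact: (scan_inv_droplast c0inv).
Qed.

Lemma size_scan_iter k cs : size (scan_iter k cs) = k.
Proof. by elim: k cs => //= k IH cs; case: scan_step => cs' w /=; rewrite IH. Qed.

Lemma scan_iter_inv A k c0 cs : size c0 = k -> sorted col_le (c0 :: cs) ->
  {in c0 :: cs, forall c, scan_inv A k c} ->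
  forall t, t < k -> nbelow A (nth 0 (scan_iter k (c0 :: cs)) t) < k - t.
Proof.
elim: k c0 cs => // k IH c0 cs szc0 sorted_cs csinv t tk.
have [[cs' E] sorted_cs' cs'inv w_bound] := scan_step_inv szc0 sorted_cs csinv.
rewrite /=; case: scan_step E sorted_cs' cs'inv w_bound => _ w /= ->.
move=> sorted_cs' cs'inv w_bound; case: t tk => [|t] tk //=; rewrite subSS.
by apply: IH sorted_cs' cs'inv t tk; rewrite size_droplast szc0.
Qed.

Lemma ewis_go_ge v cs : v <= (ewis_go v cs).2.
Proof.
elim: cs v => //= c cs IH v; case: (leqP v (last 0 c)) => [vc|_].
  by case: ewis_go (IH (last 0 c)) => r w /= cw; apply: leq_trans vc cw.
by case: ewis_go (IH v).
Qed.

Lemma scan_iter_ge k c0 cs : size c0 = k ->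
  forall t, t < k -> nth 0 c0 (k.-1 - t) <= nth 0 (scan_iter k (c0 :: cs)) t.
Proof.
elim: k c0 cs => // k IH c0 cs szc0 t tk /=.
rewrite /scan_step /= szc0 /=.
case: ewis_go (ewis_go_ge (last 0 c0) [seq c <- cs | size c != 0]) => r w /= lw.
case: t tk => [|t] tk /=; first by rewrite subn0 -[k]/(k.+1.-1) -szc0 nth_last.
apply: leq_trans (IH _ _ _ t tk); last by rewrite size_droplast szc0.
rewrite nth_droplast; last by rewrite szc0; lia.
by rewrite subnS -subn1 subnAC subn1.
Qed.

Lemma zeta_antimono lam : {homo zeta lam : l j /~ l <= j}.
Proof. by move=> l j lj; apply: sub_count => x /=; apply: leq_trans. Qed.

Lemma mem_Rlist n lam j : 1 <= j <= lam1 lam -> zeta lam j < n ->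
  zeta lam j \in Rlist n lam.
Proof.
move=> hj zn; rewrite mem_sort mem_undup; apply: map_f.
by rewrite mem_filter zn mem_iota; lia.
Qed.

(* Positions are 0-based here, [pi_at] is 1-based.  The witness block [h] is
   the one containing position [ib], i.e. [q_h <= ib < q_(h+1)]; [zeta j] and
   [zeta l] are block boundaries on either side of it. *)
Lemma R312_of_positions n lam pi l j ia ib ic :
  1 <= l <= j -> j <= lam1 lam -> zeta lam l < n ->
  ia < zeta lam j <= ib -> ib < zeta lam l <= ic -> ic < n ->
  nth 0 pi ib < nth 0 pi ic < nth 0 pi ia -> R312_containing n lam pi.
Proof.
move=> hlj hj zln hia hib hic hpi.
have zjl : zeta lam j <= zeta lam l by apply: zeta_antimono; lia.
set s := Rlist n lam.
have ss : sorted leq s by apply: sort_sorted; exact: leq_total.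
have zjs : zeta lam j \in s by apply: mem_Rlist; lia.
have zls : zeta lam l \in s by apply: mem_Rlist; lia.
have ijs : index (zeta lam j) s < size s by rewrite index_mem.
have ils : index (zeta lam l) s < size s by rewrite index_mem.
set h := nbelow s ib.+1.
have jh : index (zeta lam j) s < h by rewrite -sorted_nth_lt // nth_index //; lia.
have hl : h <= index (zeta lam l) s.
  by rewrite leqNgt -sorted_nth_lt // nth_index //; lia.
have qh : nth 0 s h.-1 < ib.+1 by rewrite sorted_nth_lt //; lia.
have qh1 : ib.+1 <= nth 0 s h by rewrite leqNgt sorted_nth_lt //; lia.
have jqh : zeta lam j <= nth 0 s h.-1.
  rewrite -{1}(nth_index 0 zjs).
  by apply: (sorted_leq_nth leq_trans) => //; rewrite ?inE; lia.
have qhl : nth 0 s h <= zeta lam l.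
  rewrite -[leqRHS](nth_index 0 zls).
  by apply: (sorted_leq_nth leq_trans) => //; rewrite ?inE; lia.
exists h; split; first by rewrite /rR -/s; lia.
have -> : qq n lam h = nth 0 s h.-1 by rewrite /qq -/s; case: (h) jh.
have -> : qq n lam h.+1 = nth 0 s h by [].
by exists ia.+1, ib.+1, ic.+1; rewrite /pi_at /=; split; lia.
Qed.

Definition keycol (lam pi : seq nat) (j : nat) : seq nat :=
  sort leq (take (zeta lam j) pi).

Lemma entry_key lam pi j i : 1 <= j <= lam1 lam ->
  entry (key lam pi) j i = nth 0 (keycol lam pi j) i.-1.
Proof.
move=> hj; rewrite /entry /key (nth_map 0) ?size_iota; last by lia.
by rewrite nth_iota; [congr nth; congr keycol | ]; lia.
Qed.

Lemma nbelow_keycol_split lam pi l j x : zeta lam j <= zeta lam l ->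
  nbelow (keycol lam pi l) x =
  nbelow (keycol lam pi j) x + nbelow (drop (zeta lam j) (take (zeta lam l) pi)) x.
Proof.
move=> zjl; rewrite /nbelow /keycol !(permP (permEl (perm_sort _ _))) -count_cat.
by rewrite -{1}(cat_take_drop (zeta lam j) (take _ pi)) take_takel.
Qed.

Lemma sorted_keycol lam pi j : sorted leq (keycol lam pi j).
Proof. by apply: sort_sorted; exact: leq_total. Qed.

Lemma entry_scanning lam T l k : 1 <= l <= lam1 lam -> 1 <= k <= zeta lam l ->
  entry (scanning lam T) l k =
  nth 0 (scan_iter (zeta lam l) (drop l.-1 T)) (zeta lam l - k).
Proof.
move=> hl hk; rewrite /entry /scanning (nth_map 0) ?size_iota; last by lia.
rewrite nth_iota; last by lia.
have -> : 1 + l.-1 = l by lia.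
rewrite nth_rev size_scan_iter; last by lia.
by congr nth; lia.
Qed.

Section Tableau.

Variables (n : nat) (lam : seq nat) (T : seq (seq nat)).
Hypothesis T_tab : is_tableau n lam T.

Lemma drop_tableau_cols l : 1 <= l <= lam1 lam ->
  drop l.-1 T = nth [::] T l.-1 :: drop l T.
Proof.
case: T_tab => szT _ hl; rewrite (drop_nth [::]); last by rewrite szT; lia.
by rewrite (_ : l.-1.+1 = l) //; lia.
Qed.

Lemma mem_drop_tableau_cols l c : 1 <= l -> c \in drop l.-1 T ->
  exists2 j, l <= j <= lam1 lam & c = nth [::] T j.-1.
Proof.
case: T_tab => szT _ hl /(nthP [::])[i]; rewrite size_drop szT nth_drop => hi <-.
by exists (l + i); [lia | congr nth; lia].
Qed.

Lemma sorted_tableau_cols l : 1 <= l <= lam1 lam -> sorted col_le (drop l.-1 T).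
Proof.
case: T_tab => szT [szcol [_ [_ rowle]]] hl.
apply/(sortedP [::]) => i; rewrite size_drop !nth_drop addnS => hi.
set j := l.-1 + i.
have /= sz1 := szcol j.+1 ltac:(lia).
have /= sz2 := szcol j.+2 ltac:(lia).
have zj : zeta lam j.+2 <= zeta lam j.+1 by apply: zeta_antimono.
apply/col_leP; rewrite sz1 sz2; split=> // r hr.
by have := rowle j.+1 r.+1; rewrite /entry /=; apply; split; lia.
Qed.

Lemma scanning_ge : tab_le lam T (scanning lam T).
Proof.
case: (T_tab) => _ [szcol _] l k [hl hk].
rewrite entry_scanning // drop_tableau_cols //.
have := scan_iter_ge (drop l T) (szcol l hl) (t := zeta lam l - k).
by rewrite /entry (_ : (zeta lam l).-1 - (zeta lam l - k) = k.-1); [apply; lia | lia].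
Qed.

End Tableau.

Section AvoidingKey.

Variables (n : nat) (lam pi : seq nat).
Hypothesis size_lam : size lam = n.
Hypothesis pi_perm : perm_eq pi (iota 1 n).
Hypothesis pi_avoid : ~ R312_containing n lam pi.

Let size_pi : size pi = n.
Proof. by rewrite (perm_size pi_perm) size_iota. Qed.

Lemma size_keycol j : size (keycol lam pi j) = zeta lam j.
Proof. by rewrite size_sort size_takel // size_pi -size_lam count_size. Qed.

Lemma mem_pi x : (x \in pi) = (1 <= x <= n).
Proof. by rewrite (perm_mem pi_perm) mem_iota; lia. Qed.

(* A [b < x] lying between [a] (before position [zeta j]) and [x] (after
   position [zeta l]) would make [a, b, x] a 312 pattern. *)
Lemma nbelow_gap_eq0 l j x a : 1 <= l <= j -> j <= lam1 lam ->
  x \in pi -> x \notin take (zeta lam l) pi -> a \in take (zeta lam j) pi ->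
  x < a -> nbelow (drop (zeta lam j) (take (zeta lam l) pi)) x = 0.
Proof.
move=> hlj hj xpi xl aj xa.
have zjl : zeta lam j <= zeta lam l by apply: zeta_antimono; lia.
have apos : index a pi < zeta lam j by rewrite -in_take // (mem_take aj).
have xpos : zeta lam l <= index x pi by rewrite leqNgt -in_take.
have xn : index x pi < n by rewrite -size_pi index_mem.
apply: nbelow_eq0 => b /(nthP 0)[i]; rewrite size_drop size_take_min => hi <-.
rewrite nth_drop nth_take; last by lia.
rewrite leqNgt; apply/negP => bx; apply: pi_avoid.
apply: (R312_of_positions (l := l) (j := j) (ia := index a pi)
         (ib := zeta lam j + i) (ic := index x pi)) => //; try lia.
by rewrite !nth_index ?(mem_take aj) // bx.
Qed.

Lemma keycol_scan_inv l j c : 1 <= l <= j -> j <= lam1 lam ->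
  size c = zeta lam j ->
  (forall r, r.+1 < size c -> nth 0 c r < nth 0 c r.+1) ->
  (forall r, r < size c -> 1 <= nth 0 c r <= n) ->
  (forall r, r < size c -> nth 0 c r <= nth 0 (keycol lam pi j) r) ->
  scan_inv (keycol lam pi l) (zeta lam l) c.
Proof.
move=> hlj hj szc incr crange cY.
have zjl : zeta lam j <= zeta lam l by apply: zeta_antimono; lia.
have zln : zeta lam l <= n by rewrite -size_lam count_size.
have below_B r : r < size c -> nbelow (keycol lam pi j) (nth 0 c r) <= r.
  move=> rc; have := cY r rc.
  by rewrite leqNgt sorted_nth_lt ?size_keycol ?sorted_keycol -?szc // -leqNgt.
split=> //; first by rewrite szc.
  move=> r rc; rewrite (nbelow_keycol_split _ _ zjl).
  have := count_size (fun b => b < nth 0 c r)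
                     (drop (zeta lam j) (take (zeta lam l) pi)).
  rewrite size_drop size_takel ?size_pi // => /leq_add /(_ (below_B _ rc)).
  by rewrite /nbelow; lia.
move=> r rc cA; rewrite (nbelow_keycol_split _ _ zjl).
set a := nth 0 (keycol lam pi j) r.
have aj : a \in take (zeta lam j) pi.
  by rewrite -(mem_sort leq) mem_nth // size_keycol -szc.
have cl : nth 0 c r \notin take (zeta lam l) pi by rewrite -(mem_sort leq).
have ca : nth 0 c r < a.
  rewrite ltn_neqAle cY // andbT; apply: contra cl => /eqP ->.
  by move: aj; rewrite -(take_takel _ zjl); apply: mem_take.
by rewrite (nbelow_gap_eq0 hlj hj _ cl aj ca) ?mem_pi ?crange // addn0 below_B.
Qed.

Lemma scanning_le_key T : is_tableau n lam T -> tab_le lam T (key lam pi) ->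
  tab_le lam (scanning lam T) (key lam pi).
Proof.
move=> T_tab TY l k [hl hk].
have [_ [szcol [rng [colinc _]]]] := T_tab.
rewrite entry_scanning // entry_key // (drop_tableau_cols T_tab hl).
have inv c : c \in nth [::] T l.-1 :: drop l T ->
    scan_inv (keycol lam pi l) (zeta lam l) c.
  rewrite -(drop_tableau_cols T_tab hl).
  case/(mem_drop_tableau_cols T_tab); first by lia.
  move=> j hj ->; have szj := szcol j ltac:(lia).
  have box r : r < zeta lam j -> is_box lam j r.+1 by split; lia.
  apply: (keycol_scan_inv (j := j)) => //; try lia; rewrite szj => r hr.
  - exact: colinc j r.+1 (box r (ltnW hr)) (box r.+1 hr).
  - exact: rng j r.+1 (box r hr).
  - by have := TY j r.+1 (box r hr); rewrite entry_key //; lia.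
have sorted_cols := sorted_tableau_cols T_tab hl.
rewrite (drop_tableau_cols T_tab hl) in sorted_cols.
have := scan_iter_inv (szcol l hl) sorted_cols inv (t := zeta lam l - k).
rewrite subKn; last by lia.
move=> /(_ ltac:(lia)) below.
by rewrite leqNgt sorted_nth_lt ?sorted_keycol ?size_keycol; lia.
Qed.

End AvoidingKey.

Unset Implicit Arguments.

Theorem theorem6p3 (n : nat) (hn : 1 <= n) (lam pi : seq nat)
  (Hlam : is_partition n lam) (Hpi : R_perm n lam pi)
  (Havoid : ~ R312_containing n lam pi) :
  forall T : seq (seq nat), demazure n lam pi T <-> below_key n lam pi T.
Proof.
have [size_lam _] := Hlam.
have [pi_perm _] := Hpi.
move=> T; split=> -[T_tab T_le]; split=> //.
  by move=> j i box; apply: leq_trans (scanning_ge T_tab box) (T_le j i box).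
exact: (scanning_le_key size_lam pi_perm Havoid T_tab T_le).
Qed.
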